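(* Let $n\ge 4$ and let $D_1,\dots,D_{n-1}$ be positive numbers satisfying $D_kD_{l-j}\ge D_jD_{l-k}+D_lD_{k-j}$ for all integers $1\le j<k<l\le n-1$. Put $s_k=\sin(k\pi/n)$ and $a_k=\log(D_k/s_k)$. Then for all $1\le j<k<l\le n-1$, $$a_k+a_{l-j}\ \ge\ \frac{s_js_{l-k}}{s_ks_{l-j}}\,(a_j+a_{l-k})+\frac{s_ls_{k-j}}{s_ks_{l-j}}\,(a_l+a_{k-j}).$$ *)

From Stdlib Require Import Reals Lra Lia.
Open Scope R_scope.

Definition s (n k : nat) : R := sin (INR k * PI / INR n).

Definition a (n : nat) (D : nat -> R) (k : nat) : R := ln (D k / s n k).

From Stdlib Require Import Reals Lra Lia.
Open Scope R_scope.

(* Write P = s_k s_{l-j}, Q = s_j s_{l-k}, R = s_l s_{k-j}.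
   The sine values satisfy Ptolemy's identity P = Q + R, all of them are
   positive, and a_i + a_m = ln (D_i D_m / (s_i s_m)).  The claim therefore
   reads
       Q/P ln(y/Q) + R/P ln(z/R) <= ln(x/P)
   with x = D_k D_{l-j}, y = D_j D_{l-k}, z = D_l D_{k-j} and x >= y + z,
   which is concavity of ln at the weights Q/P, R/P (summing to 1) followed
   by monotonicity of ln: the weighted average of y/Q and z/R is (y+z)/P.
   The file first proves concavity of ln (from convexity of exp, via the
   tangent-line bound exp t >= 1 + t), then the resulting abstract
   inequality, then the trigonometric facts, and finally the theorem. *)

(* Convexity of exp at two points: the tangent line at the weighted mean
   w1 X + w2 Y lies below exp. *)
Lemma exp_convex w1 w2 X Y : 0 <= w1 -> 0 <= w2 -> w1 + w2 = 1 ->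
  exp (w1 * X + w2 * Y) <= w1 * exp X + w2 * exp Y.
Proof.
  intros hw1 hw2 hw. set (m := w1 * X + w2 * Y).
  assert (EX : exp X = exp m * exp (X - m)) by (rewrite <- exp_plus; f_equal; ring).
  assert (EY : exp Y = exp m * exp (Y - m)) by (rewrite <- exp_plus; f_equal; ring).
  pose proof (exp_ineq1_le (X - m)). pose proof (exp_ineq1_le (Y - m)).
  pose proof (exp_pos m).
  assert (tangent : w1 * exp (X - m) + w2 * exp (Y - m) >= 1).
  { assert (w1 * (1 + (X - m)) + w2 * (1 + (Y - m)) = 1) by (unfold m; nra). nra. }
  rewrite EX, EY. nra.
Qed.

Lemma ln_monotone x y : 0 < x -> x <= y -> ln x <= ln y.
Proof.
  intros hx [hlt | heq].
  - left. now apply ln_increasing.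
  - right. now rewrite heq.
Qed.

Lemma ln_concave w1 w2 u v : 0 <= w1 -> 0 <= w2 -> w1 + w2 = 1 ->
  0 < u -> 0 < v -> w1 * ln u + w2 * ln v <= ln (w1 * u + w2 * v).
Proof.
  intros hw1 hw2 hw hu hv.
  rewrite <- (ln_exp (w1 * ln u + w2 * ln v)).
  apply ln_monotone; [apply exp_pos |].
  rewrite <- (exp_ln u hu) at 2. rewrite <- (exp_ln v hv) at 2.
  apply exp_convex; assumption.
Qed.

Lemma ln_ratio_superadditive P Q R x y z :
  0 < Q -> 0 < R -> P = Q + R -> 0 < y -> 0 < z -> y + z <= x ->
  Q / P * ln (y / Q) + R / P * ln (z / R) <= ln (x / P).
Proof.
  intros hQ hR hP hy hz hx.
  assert (hw1 : 0 <= Q / P) by (apply Rlt_le, Rdiv_lt_0_compat; lra).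
  assert (hw2 : 0 <= R / P) by (apply Rlt_le, Rdiv_lt_0_compat; lra).
  assert (hw : Q / P + R / P = 1) by (rewrite hP; field; lra).
  assert (average : Q / P * (y / Q) + R / P * (z / R) = (y + z) / P)
    by (field; lra).
  eapply Rle_trans.
  - apply ln_concave; auto; apply Rdiv_lt_0_compat; lra.
  - rewrite average. apply ln_monotone.
    + apply Rdiv_lt_0_compat; lra.
    + apply Rmult_le_compat_r; [apply Rlt_le, Rinv_0_lt_compat; lra | exact hx].
Qed.

Lemma sin_ptolemy x y z :
  sin y * sin (z - x) = sin x * sin (z - y) + sin z * sin (y - x).
Proof. rewrite !sin_minus. ring. Qed.

Lemma s_pos n k : (1 <= k)%nat -> (k <= n - 1)%nat -> 0 < s n k.
Proof.
  intros hk1 hk2. unfold s.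
  assert (Hk : 1 <= INR k) by (apply (le_INR 1); lia).
  assert (Hkn : INR k + 1 <= INR n) by (rewrite <- S_INR; apply le_INR; lia).
  pose proof PI_RGT_0.
  apply sin_gt_0.
  - unfold Rdiv. apply Rmult_lt_0_compat; [nra | apply Rinv_0_lt_compat; lra].
  - apply (Rmult_lt_reg_r (INR n)); [lra |]. unfold Rdiv.
    rewrite Rmult_assoc, Rinv_l by lra. nra.
Qed.

Lemma s_sub n p q : (q <= p)%nat ->
  s n (p - q) = sin (INR p * PI / INR n - INR q * PI / INR n).
Proof. intros h. unfold s. rewrite minus_INR by exact h. f_equal. unfold Rdiv. ring. Qed.

Lemma s_ptolemy n j k l : (j <= k)%nat -> (k <= l)%nat ->
  s n k * s n (l - j) = s n j * s n (l - k) + s n l * s n (k - j).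
Proof. intros hjk hkl. rewrite !s_sub by lia. apply sin_ptolemy. Qed.

Lemma a_add n D i m : 0 < D i -> 0 < D m -> 0 < s n i -> 0 < s n m ->
  a n D i + a n D m = ln (D i * D m / (s n i * s n m)).
Proof.
  intros hDi hDm hsi hsm. unfold a.
  rewrite <- ln_mult by (apply Rdiv_lt_0_compat; assumption).
  f_equal. field. lra.
Qed.

Theorem mainTheorem10 (n : nat) (D : nat -> R)
  (hn : (4 <= n)%nat)
  (hpos : forall k : nat, (1 <= k <= n - 1)%nat -> 0 < D k)
  (hineq : forall j k l : nat, (1 <= j)%nat -> (j < k)%nat -> (k < l)%nat ->
      (l <= n - 1)%nat ->
      D k * D (l - j)%nat >= D j * D (l - k)%nat + D l * D (k - j)%nat) :
  forall j k l : nat, (1 <= j)%nat -> (j < k)%nat -> (k < l)%nat ->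
    (l <= n - 1)%nat ->
    a n D k + a n D (l - j)%nat >=
      (s n j * s n (l - k)%nat) / (s n k * s n (l - j)%nat)
        * (a n D j + a n D (l - k)%nat)
      + (s n l * s n (k - j)%nat) / (s n k * s n (l - j)%nat)
        * (a n D l + a n D (k - j)%nat).
Proof.
  intros j k l hj hjk hkl hl.
  assert (Ds : forall i, (1 <= i)%nat -> (i <= n - 1)%nat -> 0 < D i /\ 0 < s n i)
    by (intros i hi1 hi2; split; [apply hpos; lia | apply s_pos; lia]).
  destruct (Ds j) as [Dj Sj]; try lia. destruct (Ds k) as [Dk Sk]; try lia.
  destruct (Ds l) as [Dl Sl]; try lia.
  destruct (Ds (l - j)%nat) as [Dlj Slj]; try lia.
  destruct (Ds (l - k)%nat) as [Dlk Slk]; try lia.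
  destruct (Ds (k - j)%nat) as [Dkj Skj]; try lia.
  rewrite !a_add by assumption.
  apply Rle_ge, ln_ratio_superadditive.
  - apply Rmult_lt_0_compat; assumption.
  - apply Rmult_lt_0_compat; assumption.
  - apply s_ptolemy; lia.
  - apply Rmult_lt_0_compat; assumption.
  - apply Rmult_lt_0_compat; assumption.
  - apply Rge_le, hineq; assumption.
Qed.
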